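(* Let $r\ge2$ be an integer and $\psi\in C_p(\mathbb{R})$. Assume there is a constant $m>0$ such that $m\,d(x)\le\psi(x)$ for all $x\in[0,1]$. Then $$\frac{mr}{r-1}\,x(1-x)\le m\,\tau_r(x)\le U_\psi(x),\qquad x\in[0,1].$$
   Context: $C_p(\mathbb{R})$ denotes the set of all continuous functions $f:\mathbb{R}\to\mathbb{R}$ periodic with period $1$ with $f(0)=0$. $d(x)=\min\{|x-z|: z\in\mathbb{Z}\}$ is the distance to $\mathbb{Z}$. For $\psi\in C_p(\mathbb{R})$, $U_\psi(x)=\sum_{j=0}^\infty r^{-j}\psi(r^jx)$, and $\tau_r=U_d$, i.e. $\tau_r(x)=\sum_{j=0}^\infty r^{-j}d(r^jx)$. *)

From Stdlib Require Import Reals.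
From Coquelicot Require Import Coquelicot.
Open Scope R_scope.

Definition Cp (f : R -> R) : Prop :=
  (forall x, continuity_pt f x) /\ (forall x, f (x + 1) = f x) /\ f 0 = 0.

(* d(x) = min{|x - z| : z in Z}, the distance from x to the nearest integer;
   the two candidates are floor x and floor x + 1. *)
Definition dist_Z (x : R) : R :=
  Rmin (Rabs (x - IZR (Int_part x))) (Rabs (x - IZR (Int_part x + 1))).

Definition U (r : nat) (psi : R -> R) (x : R) : R :=
  Series (fun j : nat => (/ INR r) ^ j * psi (INR r ^ j * x)).

Definition tau (r : nat) (x : R) : R := U r dist_Z x.

(* The upper bound compares the two series termwise, after extending [m d <= psi]
   from [0,1] to all of R by periodicity.  For the lower bound, the periodic
   parabola [p x = r/(r-1) {x} (1 - {x})] is a subsolution of the functional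
   equation [tau x = d x + tau (r x) / r] satisfied by [tau_r]:
   [p x <= d x + p (r x) / r].  Iterating it [n] times and letting the
   [O(r^-n)] remainder vanish gives [p <= tau_r], and [p x = r/(r-1) x (1-x)]
   on [0,1]. *)

From Stdlib Require Import Reals Lra Lia Psatz ZArith.
From Coquelicot Require Import Coquelicot.
Open Scope R_scope.

Definition frac (y : R) : R := y - IZR (Int_part y).

Definition periodic (f : R -> R) : Prop := forall x, f (x + 1) = f x.

Lemma Int_part_bounds (y : R) : IZR (Int_part y) <= y < IZR (Int_part y) + 1.
Proof. destruct (base_Int_part y). lra. Qed.

Lemma Int_part_unique (y : R) (n : Z) : IZR n <= y < IZR n + 1 -> Int_part y = n.
Proof.
  intros [H1 H2]. unfold Int_part.
  assert (E : (n + 1)%Z = up y) by (apply tech_up; rewrite plus_IZR; lra).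
  lia.
Qed.

Lemma Int_part_add_IZR (y : R) (z : Z) : Int_part (y + IZR z) = (Int_part y + z)%Z.
Proof.
  apply Int_part_unique. pose proof (Int_part_bounds y). rewrite plus_IZR. lra.
Qed.

Lemma frac_bounds (y : R) : 0 <= frac y < 1.
Proof. unfold frac. pose proof (Int_part_bounds y). lra. Qed.

Lemma frac_add_IZR (y : R) (z : Z) : frac (y + IZR z) = frac y.
Proof. unfold frac. rewrite Int_part_add_IZR, plus_IZR. ring. Qed.

Lemma frac_id (y : R) : 0 <= y < 1 -> frac y = y.
Proof.
  intros Hy. unfold frac. rewrite (Int_part_unique y 0) by (simpl; lra). simpl. ring.
Qed.

Lemma frac_1 : frac 1 = 0.
Proof.
  replace 1 with (0 + IZR 1) by (simpl; ring).
  rewrite frac_add_IZR. apply frac_id. lra.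
Qed.

Lemma frac_mul_INR (r : nat) (y : R) : frac (INR r * y) = frac (INR r * frac y).
Proof.
  replace (INR r * y) with (INR r * frac y + IZR (Z.of_nat r * Int_part y)).
  - apply frac_add_IZR.
  - unfold frac. rewrite mult_IZR, <- INR_IZR_INZ. ring.
Qed.

Lemma dist_Z_frac (y : R) : dist_Z y = Rmin (frac y) (1 - frac y).
Proof.
  unfold dist_Z. pose proof (frac_bounds y). unfold frac in *.
  rewrite plus_IZR, (Rabs_right (y - _)), Rabs_left1 by lra.
  f_equal. ring.
Qed.

Lemma dist_Z_bounds (y : R) : 0 <= dist_Z y <= 1.
Proof.
  rewrite dist_Z_frac. pose proof (frac_bounds y). unfold Rmin. destruct Rle_dec; lra.
Qed.

Lemma dist_Z_periodic : periodic dist_Z.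
Proof.
  intros x. rewrite !dist_Z_frac. change (x + 1) with (x + IZR 1).
  now rewrite frac_add_IZR.
Qed.

Lemma periodic_add_IZR (f : R -> R) : periodic f -> forall y z, f (y + IZR z) = f y.
Proof.
  intros Hf.
  assert (Hn : forall n y, f (y + INR n) = f y).
  { induction n as [|n IH]; intros y.
    - simpl. now rewrite Rplus_0_r.
    - now rewrite S_INR, <- Rplus_assoc, Hf. }
  intros y z. destruct (Z_le_gt_dec 0 z) as [Hz|Hz].
  - now rewrite <- (Z2Nat.id z Hz), <- INR_IZR_INZ.
  - rewrite <- (Hn (Z.to_nat (- z)) (y + IZR z)), INR_IZR_INZ, Z2Nat.id, opp_IZR by lia.
    f_equal. ring.
Qed.

Lemma periodic_frac (f : R -> R) : periodic f -> forall y, f y = f (frac y).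
Proof.
  intros Hf y. unfold frac.
  replace (y - IZR (Int_part y)) with (y + IZR (- Int_part y)) by (rewrite opp_IZR; ring).
  symmetry. now apply periodic_add_IZR.
Qed.

Lemma periodic_le (f g : R -> R) : periodic f -> periodic g ->
  (forall x, 0 <= x <= 1 -> f x <= g x) -> forall y, f y <= g y.
Proof.
  intros Hf Hg Hle y. rewrite (periodic_frac f Hf), (periodic_frac g Hg).
  apply Hle. pose proof (frac_bounds y). lra.
Qed.

Lemma periodic_continuous_bounded (f : R -> R) : periodic f ->
  (forall x, continuity_pt f x) -> exists M, forall y, f y <= M.
Proof.
  intros Hf Hc.
  destruct (continuity_ab_maj f 0 1 ltac:(lra) (fun x _ => Hc x)) as [x [Hx _]].
  exists (f x). intros y. rewrite (periodic_frac f Hf).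
  apply Hx. pose proof (frac_bounds y). lra.
Qed.

Definition parabola (x : R) : R := x * (1 - x).

Lemma parabola_1_minus (x : R) : parabola (1 - x) = parabola x.
Proof. unfold parabola. ring. Qed.

(* Writing [u = (k + t) / r], the slack of the inequality is
   [(k (k - 1) + 2 k t + (r - 1) t (1 - t)) / (r (r - 1))]. *)
Lemma parabola_step_le (r k t : R) : 1 < r -> 0 <= k -> 0 <= k * (k - 1) -> 0 <= t <= 1 ->
  r / (r - 1) * parabola ((k + t) / r) <= (k + t) / r + r / (r - 1) * parabola t / r.
Proof.
  intros Hr Hk Hkk Ht. unfold parabola.
  assert (E : (k + t) / r + r / (r - 1) * (t * (1 - t)) / r
              - r / (r - 1) * ((k + t) / r * (1 - (k + t) / r))
              = (k * (k - 1) + 2 * k * t + (r - 1) * (t * (1 - t))) / (r * (r - 1)))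
    by (field; lra).
  assert (0 <= (k * (k - 1) + 2 * k * t + (r - 1) * (t * (1 - t))) / (r * (r - 1))).
  { apply Rdiv_le_0_compat; [|nra]. assert (0 <= t * (1 - t)) by nra. nra. }
  lra.
Qed.

Lemma IZR_mul_pred_ge0 (k : Z) : 0 <= IZR k * (IZR k - 1).
Proof.
  rewrite <- (minus_IZR k 1), <- mult_IZR. apply IZR_le. nia.
Qed.

Section Takagi.

Variable r : nat.
Hypothesis r_ge2 : (2 <= r)%nat.

Lemma INR_r_ge2 : 2 <= INR r.
Proof. apply (le_INR 2) in r_ge2. simpl in r_ge2. lra. Qed.

Lemma inv_r_bounds : 0 <= / INR r < 1.
Proof.
  pose proof INR_r_ge2. split.
  - apply Rlt_le, Rinv_0_lt_compat. lra.
  - rewrite <- Rinv_1. apply Rinv_lt_contravar; lra.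
Qed.

Lemma ex_series_geom_inv_r : ex_series (fun j => (/ INR r) ^ j).
Proof.
  apply ex_series_geom. pose proof inv_r_bounds. rewrite Rabs_right; lra.
Qed.

Lemma ex_series_U (f : R -> R) (M : R) : (forall y, Rabs (f y) <= M) ->
  forall x, ex_series (fun j => (/ INR r) ^ j * f (INR r ^ j * x)).
Proof.
  intros Hf x.
  apply (@ex_series_le R_AbsRing R_CompleteNormedModule _ (fun j => M * (/ INR r) ^ j)).
  - intros j. change norm with Rabs. simpl.
    rewrite Rabs_mult, Rabs_right by (apply Rle_ge, pow_le, inv_r_bounds).
    rewrite Rmult_comm. apply Rmult_le_compat_r; [apply pow_le, inv_r_bounds | apply Hf].
  - apply (@ex_series_scal_l R_AbsRing R_NormedModule M), ex_series_geom_inv_r.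
Qed.

Lemma U_scal (m : R) (f : R -> R) (x : R) : U r (fun y => m * f y) x = m * U r f x.
Proof.
  unfold U. rewrite <- Series_scal_l. apply Series_ext. intros j. ring.
Qed.

Lemma U_le (f g : R -> R) (M : R) : (forall y, 0 <= f y <= g y) -> (forall y, g y <= M) ->
  forall x, U r f x <= U r g x.
Proof.
  intros Hfg HgM x. unfold U. apply Series_le.
  - intros j. pose proof inv_r_bounds. pose proof (Hfg (INR r ^ j * x)).
    pose proof (pow_le _ j (proj1 inv_r_bounds)). split; [nra|].
    apply Rmult_le_compat_l; lra.
  - apply (ex_series_U g M). intros y. pose proof (Hfg y). rewrite Rabs_right; [apply HgM | lra].
Qed.

Lemma U_subsolution_iter (g h : R -> R) : (forall y, g y <= h y + g (INR r * y) / INR r) ->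
  forall x n, g x <= sum_n (fun j => (/ INR r) ^ j * h (INR r ^ j * x)) n
                     + (/ INR r) ^ S n * g (INR r ^ S n * x).
Proof.
  intros Hg x. pose proof INR_r_ge2.
  induction n as [|n IH].
  - rewrite sum_O. pose proof (Hg x). simpl. rewrite !Rmult_1_r, !Rmult_1_l. unfold Rdiv in *. lra.
  - rewrite sum_Sn. change plus with Rplus.
    pose proof (Hg (INR r ^ S n * x)) as Hstep.
    apply (Rmult_le_compat_l ((/ INR r) ^ S n)) in Hstep; [|apply pow_le, inv_r_bounds].
    replace (INR r * (INR r ^ S n * x)) with (INR r ^ S (S n) * x) in Hstep by (simpl; ring).
    replace ((/ INR r) ^ S (S n) * g (INR r ^ S (S n) * x))
      with ((/ INR r) ^ S n * (g (INR r ^ S (S n) * x) / INR r)) by (simpl; field; lra).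
    lra.
Qed.

Lemma le_U_of_subsolution (g h : R -> R) (B M : R) :
  (forall y, g y <= B) -> (forall y, Rabs (h y) <= M) ->
  (forall y, g y <= h y + g (INR r * y) / INR r) -> forall x, g x <= U r h x.
Proof.
  intros HgB HhM Hg x.
  set (a := fun j => (/ INR r) ^ j * h (INR r ^ j * x)).
  assert (Ha : is_lim_seq (sum_n a) (U r h x)) by apply Series_correct, (ex_series_U h M), HhM.
  assert (Htail : is_lim_seq (fun n => (/ INR r) ^ S n * B) 0).
  { replace 0 with (0 * B) by ring. apply is_lim_seq_mult'; [|apply is_lim_seq_const].
    apply (is_lim_seq_incr_1 (fun n => (/ INR r) ^ n)), is_lim_seq_geom.
    pose proof inv_r_bounds. rewrite Rabs_right; lra. }
  enough (Hlim : Rbar_le (g x) (U r h x + 0)) by (simpl in Hlim; lra).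
  refine (is_lim_seq_le (fun _ => g x) _ _ _ _ (is_lim_seq_const _)
            (is_lim_seq_plus' _ _ _ _ Ha Htail)).
  intros n. pose proof (U_subsolution_iter g h Hg x n) as Hn. fold a in Hn.
  assert ((/ INR r) ^ S n * g (INR r ^ S n * x) <= (/ INR r) ^ S n * B)
    by (apply Rmult_le_compat_l; [apply pow_le, inv_r_bounds | apply HgB]).
  lra.
Qed.

(* With [u = frac y] and [k + t = r u] ([k] integer, [t = frac (r u)]), apply
   [parabola_step_le] to [u = (k + t) / r] and to [1 - u = ((r - 1 - k) + (1 - t)) / r]. *)
Lemma parabola_frac_subsolution (y : R) :
  INR r / (INR r - 1) * parabola (frac y)
  <= dist_Z y + INR r / (INR r - 1) * parabola (frac (INR r * y)) / INR r.
Proof.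
  pose proof INR_r_ge2.
  rewrite dist_Z_frac, frac_mul_INR.
  pose proof (frac_bounds y) as Hu. set (u := frac y) in *.
  pose proof (frac_bounds (INR r * u)) as Ht. pose proof (Int_part_bounds (INR r * u)) as Hk.
  assert (Et : frac (INR r * u) = INR r * u - IZR (Int_part (INR r * u))) by reflexivity.
  set (t := frac (INR r * u)) in *. set (k := Int_part (INR r * u)) in *.
  assert (Ek0 : (0 <= k)%Z) by (apply Z.lt_pred_le, lt_IZR; simpl; nra).
  assert (Ekr : (k < Z.of_nat r)%Z) by (apply lt_IZR; rewrite <- INR_IZR_INZ; nra).
  assert (Eu : u = (IZR k + t) / INR r) by (rewrite Et; field; lra).
  assert (E1u : 1 - u = (IZR (Z.of_nat r - 1 - k) + (1 - t)) / INR r).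
  { rewrite Eu, !minus_IZR, <- INR_IZR_INZ. field. lra. }
  pose proof (parabola_step_le (INR r) (IZR k) t ltac:(lra) (IZR_le _ _ Ek0)
                (IZR_mul_pred_ge0 k) ltac:(lra)) as Hleft.
  pose proof (parabola_step_le (INR r) (IZR (Z.of_nat r - 1 - k)) (1 - t) ltac:(lra)
                (IZR_le 0 (Z.of_nat r - 1 - k) ltac:(lia)) (IZR_mul_pred_ge0 _) ltac:(lra)) as Hright.
  rewrite <- Eu in Hleft. rewrite <- E1u, !parabola_1_minus in Hright.
  unfold Rmin. destruct Rle_dec; lra.
Qed.

Lemma parabola_le_tau (x : R) : INR r / (INR r - 1) * parabola (frac x) <= tau r x.
Proof.
  pose proof INR_r_ge2.
  apply (le_U_of_subsolution (fun y => INR r / (INR r - 1) * parabola (frac y)) dist_Z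
           (INR r / (INR r - 1)) 1).
  - intros y. pose proof (frac_bounds y).
    assert (0 <= INR r / (INR r - 1)) by (apply Rdiv_le_0_compat; lra).
    assert (parabola (frac y) <= 1) by (unfold parabola; nra).
    rewrite <- (Rmult_1_r (INR r / (INR r - 1))) at 2. now apply Rmult_le_compat_l.
  - intros y. pose proof (dist_Z_bounds y). rewrite Rabs_right; lra.
  - apply parabola_frac_subsolution.
Qed.

End Takagi.

Theorem lemma3p3 (r : nat) (psi : R -> R) (m : R) :
  (2 <= r)%nat ->
  Cp psi ->
  0 < m ->
  (forall x, 0 <= x <= 1 -> m * dist_Z x <= psi x) ->
  forall x, 0 <= x <= 1 ->
    m * INR r / (INR r - 1) * x * (1 - x) <= m * tau r x /\
    m * tau r x <= U r psi x.
Proof.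
  intros Hr [Hcont [Hper _]] Hm Hmd x Hx.
  split.
  - assert (Hpar : parabola (frac x) = x * (1 - x)).
    { destruct (Req_dec x 1) as [->|Hx1].
      - rewrite frac_1. unfold parabola. ring.
      - rewrite frac_id by lra. reflexivity. }
    pose proof (parabola_le_tau r Hr x) as Hlow. rewrite Hpar in Hlow.
    replace (m * INR r / (INR r - 1) * x * (1 - x))
      with (m * (INR r / (INR r - 1) * (x * (1 - x)))) by (unfold Rdiv; ring).
    apply Rmult_le_compat_l; lra.
  - assert (Hext : forall y, m * dist_Z y <= psi y).
    { apply (periodic_le (fun y => m * dist_Z y)); [|exact Hper|exact Hmd].
      intros y. simpl. now rewrite dist_Z_periodic. }
    destruct (periodic_continuous_bounded psi Hper Hcont) as [M HM].
    unfold tau. rewrite <- U_scal.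
    apply (U_le r Hr _ _ M); [|exact HM].
    intros y. pose proof (dist_Z_bounds y). split; [nra | apply Hext].
Qed.
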